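(* Consider adversarial bandits with $K$ actions and $N$ experts with oblivious losses $\ell_t\in[0,1]^K$ and expert advice $E_{i,t}\in[K]$, and $L_T^*=\min_{i\in[N]}\sum_{t=1}^T\ell_{t,E_{i,t}}$. Let $\tilde\Phi(L)=\mathbb{E}[\min_{p\in\Delta_N}\langle L,p\rangle+F(p,Z)]$ with $\nabla\tilde\Phi\in\Delta_N$, and suppose the full-information GBPA with potential $\tilde\Phi$ is DiffStable($D_\infty$, $\|\cdot\|_\infty$) at level $\epsilon$, i.e. $D_\infty(\nabla\tilde\Phi(\sum_{s<t}v_s),\nabla\tilde\Phi(\sum_{s\le t}v_s))\le\epsilon\|v_t\|_\infty$ for all $t$ and all $v_1,\dots,v_t\in[0,\infty)^N$. Run the following algorithm without clipping: $\bar\phi_0=0$; for each $t$, $p_t=\nabla\tilde\Phi(\bar\phi_{t-1})$, $q_t=\psi_t(p_t)$ where $\psi_t(p)=\sum_{j=1}^K\sum_{i:E_{i,t}=j}p_i\mathbf{e}_j$; draw $j_t\sim q_t$, observe $\ell_{t,j_t}$, set $\hat\ell_t=\frac{\ell_{t,j_t}}{q_{t,j_t}}\mathbf{e}_{j_t}\in\mathbb{R}^K$ and $\bar\phi_t=\bar\phi_{t-1}+\phi_t(\hat\ell_t)$ where $\phi_t(\hat\ell)=\sum_{j=1}^K\sum_{i:E_{i,t}=j}\hat\ell_j\mathbf{e}_i\in\mathbb{R}^N$. Then \[\mathbb{E}\Big[\sum_{t=1}^T\ell_{t,j_t}\Big]-L_T^*\le\epsilon\,\mathbb{E}\Big[\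sum_{t=1}^T\hat\ell_{t,j_t}^2q_{t,j_t}\Big]+\mathbb{E}\Big[\max_pF(p,Z)-\min_pF(p,Z)\Big].\]
   Context: $\Delta_m$ is the probability simplex in $\mathbb{R}^m$; max and min over $p$ are over $\Delta_N$. For distributions $P,Q$, $D_\infty(P,Q)=\sup_B\log\frac{P(B)}{Q(B)}$. Expectations are over the learner's randomness and $Z$. *)

From HB Require Import structures.
From mathcomp Require Import all_boot all_order all_algebra.
From mathcomp Require Import all_classical all_reals all_analysis measurable_realfun.
Set Implicit Arguments. Unset Strict Implicit. Unset Printing Implicit Defensive.
Import Order.TTheory GRing.Theory Num.Theory.
Import numFieldNormedType.Exports.
Local Open Scope classical_set_scope.
Local Open Scope ring_scope.

Section Defs.
Variables (R : realType) (K N : nat).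

Definition simplex : set 'rV[R]_N :=
  [set p | (forall i, 0 <= p 0 i) /\ \sum_i p 0 i = 1].

Definition dotv (x y : 'rV[R]_N) : R := \sum_i x 0 i * y 0 i.

Definition infnorm (v : 'rV[R]_N) : R := \big[Num.max/0]_i `|v 0 i|.

(* D_infty(P,Q) = sup_B log (P(B)/Q(B)) for distributions on [N] given as
   vectors, with conventions log 0 = -oo and c/0 = +oo for c > 0. *)
Definition massB (p : 'rV[R]_N) (B : {set 'I_N}) : R := \sum_(i in B) p 0 i.
Definition Dinf_term (p q : 'rV[R]_N) (B : {set 'I_N}) : \bar R :=
  if massB p B == 0 then -oo%E
  else if massB q B == 0 then +oo%E
  else (ln (massB p B / massB q B))%:E.
Definition Dinf (p q : 'rV[R]_N) : \bar R :=
  \big[Order.max/-oo%E]_(B : {set 'I_N}) Dinf_term p q B.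

Definition psi (E : nat -> 'I_N -> 'I_K) (t : nat) (p : 'rV[R]_N) : 'rV[R]_K :=
  \row_j \sum_(i | E t i == j) p 0 i.

(* phi_t(lhat) = sum_j sum_{i : E_{i,t} = j} lhat_j e_i *)
Definition phi (E : nat -> 'I_N -> 'I_K) (t : nat) (lh : 'rV[R]_K) : 'rV[R]_N :=
  \row_i lh 0 (E t i).

Definition lhat (ell : nat -> 'I_K -> R) (t : nat) (q : 'rV[R]_K) (j : 'I_K)
  : 'rV[R]_K := \row_k (if k == j then ell t j / q 0 j else 0).

Section Algo.
Variables (g : 'rV[R]_N -> 'rV[R]_N) (E : nat -> 'I_N -> 'I_K)
  (ell : nat -> 'I_K -> R).

(* Histories are stored most-recent-first: j :: s means the actions of
   rounds 0..size s - 1 are s (reversed) and j is the action of round size s. *)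
Fixpoint phibar (s : seq 'I_K) : 'rV[R]_N :=
  match s with
  | [::] => 0
  | j :: s' =>
      let t := size s' in
      phibar s' + phi E t (lhat ell t (psi E t (g (phibar s'))) j)
  end.

(* q_t for the round following history s: q_t = psi_t (grad (phibar_{t-1})) *)
Definition qnext (s : seq 'I_K) : 'rV[R]_K := psi E (size s) (g (phibar s)).

Fixpoint histprob (s : seq 'I_K) : R :=
  match s with [::] => 1 | j :: s' => histprob s' * qnext s' 0 j end.

Fixpoint cumloss (s : seq 'I_K) : R :=
  match s with [::] => 0 | j :: s' => cumloss s' + ell (size s') j end.

Fixpoint hatterm (s : seq 'I_K) : R :=
  match s with
  | [::] => 0
  | j :: s' =>
      hatterm s' + (lhat ell (size s') (qnext s') j 0 j) ^+ 2 * qnext s' 0 j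
  end.

Definition Ealg (T : nat) (X : seq 'I_K -> R) : R :=
  \sum_(s : T.-tuple 'I_K) histprob s * X s.
End Algo.

Definition Lstar (E : nat -> 'I_N -> 'I_K) (ell : nat -> 'I_K -> R) (T : nat)
  : \bar R :=
  \big[Order.min/+oo%E]_(i : 'I_N) (\sum_(t < T) ell t (E t i))%:E.

End Defs.

Section Pert.
Local Open Scope ereal_scope.
Variables (R : realType) (N : nat) (d : measure_display) (Omega : measurableType d)
  (P : probability Omega R) (Zt : Type) (Z : Omega -> Zt)
  (F : 'rV[R]_N -> Zt -> R).

Definition pertmin (L : 'rV[R]_N) (w : Omega) : \bar R :=
  ereal_inf [set ((dotv L p + F p (Z w))%R)%:E | p in @simplex R N].

Definition Phitilde (L : 'rV[R]_N) : R := fine (\int[P]_w pertmin L w).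

Definition Frange (w : Omega) : \bar R :=
  ereal_sup [set (F p (Z w))%:E | p in @simplex R N]
  - ereal_inf [set (F p (Z w))%:E | p in @simplex R N].
End Pert.

(* Write L_t for phibar_t and v_t = phi_t(lhat_t), a nonnegative vector.  Since
   q_t = psi_t(p_t), the importance weighting gives <v_t, p_t> = ell_{t,j_t} exactly, on every
   history.  By the mean value theorem, Phi~(L_{t-1} + v_t) - Phi~(L_{t-1}) equals
   <v_t, grad Phi~(L_{t-1} + c v_t)> for some c in (0,1), and D_infty-stability bounds that
   gradient below by (1 - eps |v_t|_oo) p_t entrywise (as exp(-x) >= 1 - x).  With
   |v_t|_oo <= ell_{t,j_t} / q_{t,j_t}, each observed loss is at most the increment of Phi~
   plus eps lhat_{t,j_t}^2 q_{t,j_t}.  Summing over t, it remains to evaluate the minimum at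
   the vertex e_i, giving Phi~(L) - Phi~(0) <= L_i + E[max F - min F], and to note that
   E[L_{T,i}] is at most the cumulative loss of expert i (the estimate is unbiased where
   q > 0). *)
From HB Require Import structures.
From mathcomp Require Import all_boot all_order all_algebra.
From mathcomp Require Import all_classical all_reals all_analysis measurable_realfun.
From mathcomp Require Import lra.
Set Implicit Arguments. Unset Strict Implicit. Unset Printing Implicit Defensive.
Import Order.TTheory GRing.Theory Num.Theory.
Import numFieldNormedType.Exports.
Local Open Scope classical_set_scope.
Local Open Scope ring_scope.

Section Vectors.
Variables (R : realType) (N : nat).
Implicit Types (p q L v : 'rV[R]_N) (c : R).

Lemma Dinf_le_entry_lb (p p' : 'rV[R]_N) c i :
  (forall k, 0 <= p 0 k) -> (forall k, 0 <= p' 0 k) ->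
  (Dinf p p' <= c%:E)%E -> p 0 i * (1 - c) <= p' 0 i.
Proof.
move=> p_ge0 p'_ge0 Dpp'.
have : (Dinf_term p p' [set i] <= c%:E)%E by apply: le_trans Dpp'; apply: le_bigmax.
rewrite /Dinf_term /massB !big_set1.
have [->|pi_neq0] := eqVneq (p 0 i) 0; first by rewrite mul0r.
have [->|p'i_neq0] := eqVneq (p' 0 i) 0; first by rewrite leye_eq.
have pi_gt0 : 0 < p 0 i by rewrite lt_def pi_neq0 p_ge0.
have p'i_gt0 : 0 < p' 0 i by rewrite lt_def p'i_neq0 p'_ge0.
rewrite lee_fin => ln_le.
have ratio_le : p 0 i / p' 0 i <= expR c.
  by rewrite -(lnK (x := p 0 i / p' 0 i)) ?ler_expR // posrE divr_gt0.
apply: (@le_trans _ _ (p 0 i * expR (- c))).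
  by rewrite ler_wpM2l // ?p_ge0 // (le_trans _ (expR_ge1Dx _)) // addrC.
by rewrite expRN ler_pdivrMr ?expR_gt0 // mulrC -ler_pdivrMr.
Qed.

Lemma massB_setT p : simplex p -> massB p [set: 'I_N] = 1.
Proof. by case=> _ <-; apply: eq_bigl => i; rewrite inE. Qed.

Lemma Dinf_simplex_ge0 p q : simplex p -> simplex q -> (0 <= Dinf p q)%E.
Proof.
move=> sp sq; apply: (@le_trans _ _ (Dinf_term p q [set: 'I_N])); last exact: le_bigmax.
by rewrite /Dinf_term !massB_setT // oner_eq0 divr1 ln1.
Qed.

Lemma infnorm_ge0 v : 0 <= infnorm v.
Proof. exact: bigmax_ge_id. Qed.

Lemma infnorm_scale_le c v : 0 <= c <= 1 -> infnorm (c *: v) <= infnorm v.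
Proof.
case/andP=> c_ge0 c_le1; apply: bigmax_le => [|i _]; first exact: infnorm_ge0.
rewrite mxE normrM (ger0_norm c_ge0); apply: le_trans (le_bigmax _ _ i).
by rewrite ler_piMl.
Qed.

Lemma infnorm_const1 : (0 < N)%N -> infnorm (const_mx 1 : 'rV[R]_N) = 1.
Proof.
move=> N_gt0; apply/le_anti/andP; split.
  by apply: bigmax_le => // i _; rewrite mxE normr1.
by apply: le_trans (le_bigmax _ _ (Ordinal N_gt0)); rewrite mxE normr1.
Qed.

Lemma delta_mx_simplex i : simplex (delta_mx ord0 i : 'rV[R]_N).
Proof.
split=> [k|]; first by rewrite mxE ler0n.
by rewrite (bigD1 i) //= mxE !eqxx big1 ?addr0 // => k /negbTE ki; rewrite mxE ki.
Qed.

Lemma dotv_delta_mx L i : dotv L (delta_mx ord0 i) = L 0 i.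
Proof.
rewrite /dotv (bigD1 i) //= mxE !eqxx mulr1 big1 ?addr0 // => k /negbTE ki.
by rewrite mxE ki mulr0.
Qed.

Lemma dot0v p : dotv 0 p = 0.
Proof. by rewrite /dotv big1 // => k _; rewrite mxE mul0r. Qed.

End Vectors.

Lemma MVT_segment (R : realType) (V : normedModType R) (f : V -> R) (a v : V) :
  (forall x, differentiable f x) ->
  exists2 c : R, 0 < c < 1 & f (a + v) - f a = 'd f (a + c *: v) v.
Proof.
move=> df.
pose h s := f (a + s *: v).
have h_derive (x : R) : is_derive x 1 h ('d f (a + x *: v) v).
  have quotientE : (fun t : R => t^-1 *: ((h \o shift x) (t *: 1) - h x)) =
      (fun t : R => t^-1 *: ((f \o shift (a + x *: v)) (t *: v) - f (a + x *: v))).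
    apply/funext => t /=; rewrite /h; congr (_ *: (f _ - _)).
    by rewrite scaler1 scalerDl addrCA addrA.
  apply: DeriveDef; first by rewrite /derivable quotientE; apply: diff_derivable.
  by rewrite /derive quotientE -/(derive f (a + x *: v) v) deriveE.
have h_cont : {within `[0, 1], continuous h}.
  apply: continuous_subspaceT => y; apply: continuous_comp.
    by apply: continuousD; [exact: cst_continuous | apply: continuousZl; exact: cvg_id].
  exact/differentiable_continuous.
have [c c01 hc] := MVT ltr01 (fun x _ => h_derive x) h_cont.
exists c; first by move: c01; rewrite in_itv.
by move: hc; rewrite /h scale1r scale0r addr0 subr0 mulr1.
Qed.

Section DiffStable.
Variables (R : realType) (N : nat) (g : 'rV[R]_N -> 'rV[R]_N) (eps : R).
Implicit Types L v : 'rV[R]_N.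
Hypothesis g_simplex : forall L, simplex (g L).
Hypothesis g_stable : forall (t : nat) (v : nat -> 'rV[R]_N),
  (forall s i, (s <= t)%N -> 0 <= v s 0 i) ->
  (Dinf (g (\sum_(s < t) v s)) (g (\sum_(s < t.+1) v s)) <= (eps * infnorm (v t))%:E)%E.

Lemma Dinf_grad_step_le L v : (forall i, 0 <= L 0 i) -> (forall i, 0 <= v 0 i) ->
  (Dinf (g L) (g (L + v)) <= (eps * infnorm v)%:E)%E.
Proof.
move=> L_ge0 v_ge0; pose w s := if s == 0%N then L else v.
have w_ge0 s i : (s <= 1)%N -> 0 <= w s 0 i by rewrite /w; case: ifP.
by have := @g_stable 1%N w w_ge0; rewrite big_ord1 big_ord_recr big_ord1.
Qed.

Lemma diff_stable_ge0 : (0 < N)%N -> 0 <= eps.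
Proof.
move=> N_gt0; have := @Dinf_grad_step_le 0 (const_mx 1).
rewrite add0r infnorm_const1 // mulr1 => Dle.
rewrite -lee_fin; apply: le_trans (Dle _ _); first exact: Dinf_simplex_ge0.
  by move=> i; rewrite mxE.
by move=> i; rewrite mxE ler01.
Qed.

Hypothesis eps_ge0 : 0 <= eps.
Variable Phi : 'rV[R]_N -> R.
Hypothesis Phi_grad : forall L,
  differentiable Phi L /\ forall h, 'd Phi L h = dotv h (g L).

Lemma Phi_increment_ge L v : (forall i, 0 <= L 0 i) -> (forall i, 0 <= v 0 i) ->
  dotv v (g L) * (1 - eps * infnorm v) <= Phi (L + v) - Phi L.
Proof.
move=> L_ge0 v_ge0.
have [c /andP[c_gt0 c_lt1] ->] := MVT_segment L v (fun x => (Phi_grad x).1).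
rewrite (Phi_grad _).2.
have cv_ge0 i : 0 <= (c *: v) 0 i by rewrite mxE mulr_ge0 // ltW.
have Dle : (Dinf (g L) (g (L + c *: v)) <= (eps * infnorm v)%:E)%E.
  apply: le_trans (Dinf_grad_step_le L_ge0 cv_ge0) _.
  by rewrite lee_fin ler_wpM2l // infnorm_scale_le // !ltW.
rewrite /dotv mulr_suml; apply: ler_sum => i _; rewrite -mulrA ler_wpM2l ?v_ge0 //.
by apply: Dinf_le_entry_lb Dle => k; apply: (g_simplex _).1.
Qed.

End DiffStable.

Lemma big_tuple_cons (R : realType) (K n : nat) (f : n.+1.-tuple 'I_K -> R) :
  \sum_(s : n.+1.-tuple 'I_K) f s =
  \sum_(j : 'I_K) \sum_(s : n.-tuple 'I_K) f [tuple of j :: s].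
Proof.
rewrite pair_big /=.
rewrite (reindex (fun p : 'I_K * n.-tuple 'I_K => [tuple of p.1 :: p.2])) //=.
exists (fun s : n.+1.-tuple 'I_K => (thead s, [tuple of behead s])).
  by move=> [j s] _ /=; congr pair; apply: val_inj.
by move=> s _ /=; rewrite [RHS]tuple_eta.
Qed.

Lemma big_tuple0 (R : realType) (K : nat) (f : 0.-tuple 'I_K -> R) :
  \sum_(s : 0.-tuple 'I_K) f s = f [tuple].
Proof.
rewrite (eq_bigr (fun=> f [tuple])) => [|s _]; last by rewrite (tuple0 s).
by rewrite sumr_const card_tuple expn0.
Qed.

Section Algorithm.
Variables (R : realType) (K N : nat) (g : 'rV[R]_N -> 'rV[R]_N)
  (E : nat -> 'I_N -> 'I_K) (ell : nat -> 'I_K -> R).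
Hypothesis g_simplex : forall L, simplex (g L).

Local Notation q := (qnext g E ell).
Local Notation Lbar := (phibar g E ell).
Local Notation hp := (histprob g E ell).
Local Notation Ea := (Ealg g E ell).
Local Notation phihat s j := (phi E (size s) (lhat ell (size s) (q s) j)).

Lemma qnext_ge0 s j : 0 <= q s 0 j.
Proof. by rewrite mxE; apply: sumr_ge0 => i _; apply: (g_simplex _).1. Qed.

Lemma qnext_sum1 s : \sum_j q s 0 j = 1.
Proof.
rewrite -(g_simplex (Lbar s)).2 (partition_big (E (size s)) xpredT) //=.
by apply: eq_bigr => j _; rewrite mxE.
Qed.

Lemma histprob_ge0 s : 0 <= hp s.
Proof. by elim: s => [|j s IH] //=; apply: mulr_ge0 (qnext_ge0 _ _). Qed.

Lemma Ealg_cons n (X : seq 'I_K -> R) :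
  Ea n.+1 X = Ea n (fun s => \sum_j q s 0 j * X (j :: s)).
Proof.
rewrite /Ealg big_tuple_cons exchange_big; apply: eq_bigr => s _.
by rewrite mulr_sumr; apply: eq_bigr => j _; rewrite mulrA.
Qed.

Lemma Ealg_le n (X Y : seq 'I_K -> R) :
  (forall s : n.-tuple 'I_K, hp s != 0 -> X s <= Y s) -> Ea n X <= Ea n Y.
Proof.
move=> XY; apply: ler_sum => s _.
have [->|hp_neq0] := eqVneq (hp s) 0; first by rewrite !mul0r.
by rewrite ler_wpM2l ?histprob_ge0 ?XY.
Qed.

Lemma EalgD n (X Y : seq 'I_K -> R) : Ea n (fun s => X s + Y s) = Ea n X + Ea n Y.
Proof. by rewrite /Ealg -big_split; apply: eq_bigr => s _; rewrite mulrDr. Qed.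

Lemma EalgZ n c (X : seq 'I_K -> R) : Ea n (fun s => c * X s) = c * Ea n X.
Proof. by rewrite /Ealg mulr_sumr; apply: eq_bigr => s _; rewrite mulrCA. Qed.

Lemma Ealg_cst n c : Ea n (fun _ => c) = c.
Proof.
elim: n => [|n IH]; first by rewrite /Ealg big_tuple0 /= mul1r.
rewrite Ealg_cons -[RHS]IH; congr Ealg; apply: funext => s.
by rewrite -mulr_suml qnext_sum1 mul1r.
Qed.

Lemma phibar_cons s j : Lbar (j :: s) = Lbar s + phihat s j.
Proof. by []. Qed.

Lemma phibar_cons_entry s j i : Lbar (j :: s) 0 i = Lbar s 0 i + phihat s j 0 i.
Proof. by rewrite phibar_cons [LHS]mxE. Qed.

Lemma phi_lhat_entry s j i :
  phihat s j 0 i = if E (size s) i == j then ell (size s) j / q s 0 j else 0.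
Proof. by rewrite !mxE. Qed.

Lemma dotv_phi_lhat s j : q s 0 j != 0 -> dotv (phihat s j) (g (Lbar s)) = ell (size s) j.
Proof.
move=> q_neq0; rewrite /dotv.
under eq_bigr => i _ do rewrite phi_lhat_entry (fun_if (fun x => x * _)) mul0r.
rewrite -big_mkcond -mulr_sumr /=.
have -> : \sum_(i | E (size s) i == j) g (Lbar s) 0 i = q s 0 j by rewrite mxE.
by rewrite divfK.
Qed.

Variable T : nat.
Hypothesis ell01 : forall t j, (t < T)%N -> 0 <= ell t j <= 1.

Lemma phi_lhat_ge0 s j i : (size s < T)%N -> 0 <= phihat s j 0 i.
Proof.
move=> sT; rewrite phi_lhat_entry; case: ifP => // _.
by rewrite divr_ge0 ?qnext_ge0 //; case/andP: (ell01 j sT).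
Qed.

Lemma phibar_ge0 s i : (size s <= T)%N -> 0 <= Lbar s 0 i.
Proof.
elim: s => [|j s IH] sT; first by rewrite mxE.
by rewrite phibar_cons_entry addr_ge0 ?IH ?phi_lhat_ge0 // ltnW.
Qed.

Lemma infnorm_phi_lhat_le s j : (size s < T)%N ->
  infnorm (phihat s j) <= ell (size s) j / q s 0 j.
Proof.
move=> sT; have ratio_ge0 : 0 <= ell (size s) j / q s 0 j.
  by rewrite divr_ge0 ?qnext_ge0 //; case/andP: (ell01 j sT).
apply: bigmax_le => // i _; rewrite phi_lhat_entry.
by case: ifP => _; rewrite ?normr0 ?ger0_norm.
Qed.

Lemma sum_qnext_phi_lhat_le s i : (size s < T)%N ->
  \sum_j q s 0 j * phihat s j 0 i <= ell (size s) (E (size s) i).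
Proof.
move=> sT; under eq_bigr => j _ do rewrite phi_lhat_entry.
rewrite (bigD1 (E (size s) i)) //= eqxx big1 ?addr0 => [|j /negbTE ji]; last first.
  by rewrite eq_sym ji mulr0.
have [->|q_neq0] := eqVneq (q s 0 (E (size s) i)) 0; last by rewrite mulrC divfK.
by rewrite mul0r; case/andP: (ell01 (E (size s) i) sT).
Qed.

Lemma Ealg_phibar_le n i : (n <= T)%N ->
  Ea n (fun s => Lbar s 0 i) <= \sum_(t < n) ell t (E t i).
Proof.
elim: n => [|n IH] nT; first by rewrite /Ealg big_tuple0 /= mxE mulr0 big_ord0.
rewrite Ealg_cons.
apply: (@le_trans _ _ (Ea n (fun s => Lbar s 0 i + ell n (E n i)))).
  apply: Ealg_le => s _; have sT : (size s < T)%N by rewrite size_tuple.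
  under eq_bigr => j _ do rewrite phibar_cons_entry mulrDr.
  rewrite big_split /= -mulr_suml qnext_sum1 mul1r lerD2l.
  by move: (sum_qnext_phi_lhat_le i sT); rewrite !size_tuple.
by rewrite EalgD Ealg_cst big_ord_recr /= lerD2r IH // ltnW.
Qed.

Section Pathwise.
Variables (Phi : 'rV[R]_N -> R) (eps : R).
Hypothesis eps_ge0 : 0 <= eps.
Hypothesis Phi_increment : forall L v : 'rV[R]_N,
  (forall i, 0 <= L 0 i) -> (forall i, 0 <= v 0 i) ->
  dotv v (g L) * (1 - eps * infnorm v) <= Phi (L + v) - Phi L.

Lemma round_loss_le s j : (size s < T)%N -> q s 0 j != 0 ->
  ell (size s) j - eps * (lhat ell (size s) (q s) j 0 j ^+ 2 * q s 0 j)
    <= Phi (Lbar (j :: s)) - Phi (Lbar s).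
Proof.
move=> sT q_neq0; rewrite phibar_cons.
have := Phi_increment (fun i => phibar_ge0 i (ltnW sT)) (fun i => phi_lhat_ge0 j i sT).
rewrite dotv_phi_lhat //.
have lhat_sq : lhat ell (size s) (q s) j 0 j ^+ 2 * q s 0 j =
    ell (size s) j / q s 0 j * ell (size s) j.
  by rewrite mxE eqxx expr2 -mulrA divfK.
have /andP[ell_ge0 _] := ell01 j sT.
have := infnorm_phi_lhat_le j sT; rewrite lhat_sq.
set l := ell (size s) j; set nv := infnorm _ => nv_le.
have : eps * nv * l <= eps * (l / q s 0 j) * l by rewrite ler_wpM2r // ler_wpM2l.
lra.
Qed.

Lemma cumloss_le_potential s : (size s <= T)%N -> hp s != 0 ->
  cumloss ell s - eps * hatterm g E ell s <= Phi (Lbar s) - Phi 0.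
Proof.
elim: s => [_ _|j s IH sT]; first by rewrite /= !subrr mulr0.
rewrite [hp _]/= mulf_eq0 negb_or => /andP[hp_neq0 q_neq0].
have := round_loss_le sT q_neq0; have := IH (ltnW sT) hp_neq0.
rewrite [cumloss _ (_ :: _)]/= [hatterm _ _ _ (_ :: _)]/=; lra.
Qed.

End Pathwise.

End Algorithm.

Section Perturbation.
Local Open Scope ereal_scope.
Variables (R : realType) (N : nat) (d : measure_display) (Omega : measurableType d)
  (P : probability Omega R) (Zt : Type) (Z : Omega -> Zt) (F : 'rV[R]_N -> Zt -> R).

Local Notation Finf w := (ereal_inf [set (F p (Z w))%:E | p in @simplex R N]).

Lemma Frange_ge0 w : (0 < N)%N -> 0 <= Frange Z F w.
Proof.
move=> N_gt0; pose e : 'rV[R]_N := delta_mx ord0 (Ordinal N_gt0).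
rewrite /Frange -(subee (x := (F e (Z w))%:E)) //.
by apply: leeB; [apply: ereal_sup_ubound | apply: ereal_inf_lbound];
  exists e => //; apply: delta_mx_simplex.
Qed.

Lemma pertmin_sub_le (L : 'rV[R]_N) i w :
  pertmin Z F L w - pertmin Z F 0 w <= (L 0 i)%:E + Frange Z F w.
Proof.
pose e : 'rV[R]_N := delta_mx ord0 i.
have e_simplex : simplex e := delta_mx_simplex R i.
have pertmin_le : pertmin Z F L w <= (L 0 i + F e (Z w))%:E.
  by apply: ereal_inf_lbound; exists e; rewrite ?dotv_delta_mx.
have pertmin0_ge : Finf w <= pertmin Z F 0 w.
  apply: le_ereal_inf_tmp => _ [p p_simplex <-].
  by rewrite dot0v add0r; apply: ereal_inf_lbound; exists p.
apply: (le_trans (leeB pertmin_le pertmin0_ge)).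
rewrite /Frange addeA EFinD leeB // leeD2l //.
by apply: ereal_sup_ubound; exists e.
Qed.

Hypothesis pertmin_integrable : forall L, P.-integrable setT (pertmin Z F L).
Hypothesis Frange_measurable : measurable_fun setT (Frange Z F).

Lemma Phitilde_sub_le r L i : \int[P]_w Frange Z F w = r%:E ->
  (Phitilde P Z F L - Phitilde P Z F 0 <= L 0 i + r)%R.
Proof.
move=> Frange_int.
have Frange_ge0' w : 0 <= Frange Z F w.
  by apply: Frange_ge0; apply: leq_ltn_trans (leq0n i) (ltn_ord i).
have Frange_integrable : P.-integrable setT (Frange Z F).
  apply/integrableP; split => //.
  by under eq_integral do rewrite gee0_abs //; rewrite Frange_int ltry.
have cst_integrable : P.-integrable setT (cst (L 0 i)%:E).
  exact: finite_measure_integrable_cst.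
have := le_integral measurableT
  (integrableB measurableT (pertmin_integrable L) (pertmin_integrable 0))
  (integrableD measurableT cst_integrable Frange_integrable)
  (fun w _ => pertmin_sub_le L i w).
rewrite integralB // integralD // integral_cst //.
rewrite [X in _ <= _ * X + _ -> _]probability_setT mule1 Frange_int.
have := integrable_fin_num measurableT (pertmin_integrable L).
have := integrable_fin_num measurableT (pertmin_integrable 0).
by move=> fin0 finL; rewrite -lee_fin EFinB EFinD /Phitilde !fineK.
Qed.

End Perturbation.

Theorem lemma9 (R : realType) (K N T : nat)
  (d : measure_display) (Omega : measurableType d) (P : probability Omega R)
  (Zt : Type) (Z : Omega -> Zt) (F : 'rV[R]_N -> Zt -> R)
  (g : 'rV[R]_N -> 'rV[R]_N) (eps : R)
  (E : nat -> 'I_N -> 'I_K) (ell : nat -> 'I_K -> R) :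
  (0 < N)%N ->
  (* oblivious losses in [0,1]^K *)
  (forall t j, (t < T)%N -> 0 <= ell t j <= 1) ->
  (* Phi~ is well defined: the perturbed minimum is integrable *)
  (forall L, P.-integrable setT (pertmin Z F L)) ->
  (* the expectation E[max_p F - min_p F] is well defined *)
  measurable_fun setT (Frange Z F) ->
  (* g = grad Phi~, with values in Delta_N *)
  (forall L, differentiable (Phitilde P Z F) L /\
     forall h, 'd (Phitilde P Z F) L h = dotv h (g L)) ->
  (forall L, @simplex R N (g L)) ->
  (* DiffStable(D_infty, ||.||_infty) at level eps *)
  (forall (t : nat) (v : nat -> 'rV[R]_N),
     (forall s i, (s <= t)%N -> 0 <= v s 0 i) ->
     (Dinf (g (\sum_(s < t) v s)%R) (g (\sum_(s < t.+1) v s)%R)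
        <= (eps * infnorm (v t))%:E)%E) ->
  ((Ealg g E ell T (cumloss ell))%:E - Lstar E ell T
     <= (eps * Ealg g E ell T (hatterm g E ell))%:E
        + \int[P]_w Frange Z F w)%E.
Proof.
move=> N_gt0 ell01 pertmin_int Frange_meas Phi_grad g_simplex g_stable.
have eps_ge0 := diff_stable_ge0 g_simplex g_stable N_gt0.
have : (0 <= \int[P]_w Frange Z F w)%E.
  by apply: integral_ge0 => w _; apply: Frange_ge0.
case Frange_int : (\int[P]_w Frange Z F w)%E => [r| |] // _; last first.
  by rewrite addey // leey.
have [i _ Lstar_eq] := @eq_bigmin _ _ 'I_N +oo%E (Ordinal N_gt0) xpredT
  (fun i => (\sum_(t < T) ell t (E t i))%:E) isT (fun i _ => leey _).
rewrite /Lstar Lstar_eq -EFinB -EFinD lee_fin.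
have Phi_increment := Phi_increment_ge g_simplex g_stable eps_ge0 Phi_grad.
have loss_le : Ealg g E ell T (cumloss ell) <=
    Ealg g E ell T (fun s => eps * hatterm g E ell s + phibar g E ell s 0 i + r).
  apply: (Ealg_le g_simplex) => s hp_neq0.
  have := cumloss_le_potential g_simplex ell01 eps_ge0 Phi_increment
    (eq_leq (size_tuple s)) hp_neq0.
  have := Phitilde_sub_le pertmin_int Frange_meas (phibar g E ell s) i Frange_int.
  lra.
rewrite !EalgD EalgZ (Ealg_cst E ell g_simplex) in loss_le.
have := Ealg_phibar_le E g_simplex ell01 i (leqnn T).
lra.
Qed.
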